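(* Let $x_1,\dots,x_N\in\mathbb{R}^D$ be $N\ge 2$ pairwise distinct points, and let $x_1',\dots,x_N'\in\mathbb{R}^D$ satisfy $\|x_n-x_n'\|\le\varepsilon$ for all $n=1,\dots,N$, where $\|\cdot\|$ is the Euclidean norm and $$\varepsilon\le \tfrac12\min_{n_1\neq n_2}\|x_{n_1}-x_{n_2}\|.$$ Then for every integer $K\ge 1$ and every choice of indices $n_1,\dots,n_K\in\{1,\dots,N\}$, with the cyclic convention $n_{K+1}:=n_1$, $$\sum_{k=1}^{K}\tfrac12\|x_{n_k}-x_{n_k}'\|^2\;\le\;\sum_{k=1}^{K}\tfrac12\|x_{n_k}-x_{n_{k+1}}'\|^2 .$$ That is, the set $\{(x_1,x_1'),\dots,(x_N,x_N')\}$ (equivalently, the map $x_n\mapsto x_n'$) is $c$-cyclically monotone for the quadratic cost $c(x,y)=\tfrac12\|x-y\|^2$.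
   Context: A set of pairs $\{(x_n,y_n)\}_{n=1}^N$ (or the map $x_n\mapsto y_n$) is called $c$-cyclically monotone for a cost function $c$ if for every $K\ge1$ and all indices $n_1,\dots,n_K$ (with $n_{K+1}:=n_1$) one has $\sum_{k=1}^K c(x_{n_k},y_{n_k})\le\sum_{k=1}^K c(x_{n_k},y_{n_{k+1}})$. *)

From HB Require Import structures.
From mathcomp Require Import all_boot all_order all_algebra.
Set Implicit Arguments. Unset Strict Implicit. Unset Printing Implicit Defensive.
Import Order.TTheory GRing.Theory Num.Theory.
Local Open Scope ring_scope.

Definition eucl_norm (R : rcfType) (D : nat) (v : 'rV[R]_D) : R :=
  Num.sqrt (\sum_(i < D) v ord0 i ^+ 2).

Definition quad_cost (R : rcfType) (D : nat) (x y : 'rV[R]_D) : R :=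
  2^-1 * eucl_norm (x - y) ^+ 2.

(* A cycle of length K >= 1 is given by idx : 'I_K -> 'I_N with the cyclic
   convention that the successor of index k is (k+1) mod K. *)
Definition c_cyclically_monotone (T U : Type) (R : numDomainType) (c : T -> U -> R)
  (N : nat) (x : 'I_N -> T) (y : 'I_N -> U) : Prop :=
  forall (K : nat) (idx : 'I_K.+1 -> 'I_N),
    \sum_(k < K.+1) c (x (idx k)) (y (idx k))
      <= \sum_(k < K.+1) c (x (idx k)) (y (idx (ordS k))).

(* Each target x'_n is at distance at most eps from x_n, while every other point x_m is at
   distance at least 2 eps from x_n, hence at least eps from x'_n.  So x_n is a nearest point to
   x'_n among the x_m, i.e. c(x_n, x'_n) <= c(x_m, x'_n) for all m.  Summing this along a cycle
   with m the predecessor of n gives cyclic monotonicity for any cost. *)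
From HB Require Import structures.
From mathcomp Require Import all_boot all_order all_algebra.
From mathcomp Require Import ring lra.
Import Order.TTheory GRing.Theory Num.Theory.
Local Open Scope ring_scope.

Lemma cyclically_monotone_of_nearest (T U : Type) (R : numDomainType) (c : T -> U -> R)
    (N : nat) (x : 'I_N -> T) (y : 'I_N -> U) :
  (forall m n, c (x n) (y n) <= c (x m) (y n)) -> c_cyclically_monotone c x y.
Proof.
move=> nearest K idx.
rewrite [X in _ <= X](reindex_inj (@ord_pred_inj K.+1)) /=.
by apply: ler_sum => k _; rewrite ord_predK; apply: nearest.
Qed.

Section EuclideanNorm.

Variables (R : rcfType) (D : nat).
Implicit Types p q : 'rV[R]_D.

Lemma eucl_norm_ge0 p : 0 <= eucl_norm p.
Proof. exact: sqrtr_ge0. Qed.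

Lemma sqr_eucl_norm p : eucl_norm p ^+ 2 = \sum_(i < D) p ord0 i ^+ 2.
Proof. by rewrite sqr_sqrtr // sumr_ge0 // => i _; apply: sqr_ge0. Qed.

(* Avoids Cauchy-Schwarz: |p + q|^2 = (|2p + q|^2 + |q|^2) / 2 - |p|^2 >= |q|^2 / 2 - |p|^2. *)
Lemma eucl_norm_le_addr p q : 2 * eucl_norm p <= eucl_norm q -> eucl_norm p <= eucl_norm (p + q).
Proof.
move=> le2pq; rewrite -ler_sqr ?nnegrE ?eucl_norm_ge0 //.
have {le2pq} : (2 * eucl_norm p) ^+ 2 <= eucl_norm q ^+ 2.
  by rewrite ler_sqr ?nnegrE ?mulr_ge0 ?eucl_norm_ge0.
rewrite exprMn !sqr_eucl_norm.
have parallelogram : \sum_(i < D) (p + q) ord0 i ^+ 2 =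
    2^-1 * \sum_(i < D) (2 * p ord0 i + q ord0 i) ^+ 2
    + 2^-1 * \sum_(i < D) q ord0 i ^+ 2 - \sum_(i < D) p ord0 i ^+ 2.
  rewrite !mulr_sumr -!big_split -sumrB /=; apply: eq_bigr => i _.
  by rewrite mxE; field.
have : 0 <= \sum_(i < D) (2 * p ord0 i + q ord0 i) ^+ 2.
  by apply: sumr_ge0 => i _; apply: sqr_ge0.
rewrite parallelogram; lra.
Qed.

Lemma quad_cost_le (x y x' y' : 'rV[R]_D) :
  eucl_norm (x - y) <= eucl_norm (x' - y') -> quad_cost x y <= quad_cost x' y'.
Proof.
move=> le_norm; rewrite /quad_cost ler_pM2l ?invr_gt0 ?ltr0n //.
by rewrite ler_sqr ?nnegrE ?eucl_norm_ge0.
Qed.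

End EuclideanNorm.

Theorem mainTheorem1 (R : rcfType) (D N : nat) (x x' : 'I_N -> 'rV[R]_D)
  (eps : R) :
  (2 <= N)%N ->
  injective x ->
  (forall n, eucl_norm (x n - x' n) <= eps) ->
  (forall n1 n2 : 'I_N, n1 != n2 -> eps <= 2^-1 * eucl_norm (x n1 - x n2)) ->
  c_cyclically_monotone (@quad_cost R D) x x'.
Proof.
move=> _ _ close separated; apply: cyclically_monotone_of_nearest => m n.
have [-> // | neq_mn] := eqVneq m n.
apply: quad_cost_le.
have -> : x m - x' n = (x n - x' n) + (x m - x n) by rewrite [RHS]addrC addrA subrK.
apply: eucl_norm_le_addr.
by have := close n; have := separated _ _ neq_mn; lra.
Qed.
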